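(* If $G$ is a graph with girth $g(G)\ge 7$ and no isolated vertices, then $\theta(G^{[\natural 2]})=\chi_{i\mu_2}(G)=\gamma_t(G)$.
   Context: The girth is the length of a shortest cycle (infinite for forests). The exact distance-$2$ graph $G^{[\natural 2]}$ has vertex set $V(G)$, two vertices being adjacent iff their distance in $G$ equals $2$. $\theta(X)$ is the clique cover number: the minimum number of cliques partitioning $V(X)$. A set $M\subseteq V(G)$ is a $2$-distance mutual-visibility set if for every two vertices $u,v\in M$ there exists a shortest $u,v$-path of length at most $2$ none of whose internal vertices lies in $M$; it is an independent $2$-distance mutual-visibility (I2DMV) set if moreover it is independent. $\chi_{i\mu_2}(G)$ is the minimum cardinality of a partition of $V(G)$ into I2DMV sets. $\gamma_t(G)$ is the total domination number: minimum size of a set $D$ such that every vertex of $G$ has a neighbor in $D$. *)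

(* A finite simple graph is a symmetric irreflexive
   relation e on a finType T. *)
From mathcomp Require Import all_boot.
Set Implicit Arguments. Unset Strict Implicit. Unset Printing Implicit Defensive.

Section GraphDefs.
Variables (T : finType) (e : rel T).

Definition girth_ge7 : Prop :=
  forall s : seq T, uniq s -> cycle e s -> 3 <= size s -> 7 <= size s.

Definition no_isolated : Prop := forall v : T, exists u, e v u.

(* a u,v-path: u :: p is a path in e, ends at v, and has no repeated vertex;
   its length is size p *)
Definition upath (u v : T) (p : seq T) : bool :=
  [&& path e u p, last u p == v & uniq (u :: p)].

Definition shortest_upath (u v : T) (p : seq T) : Prop :=
  upath u v p /\ forall q, upath u v q -> size p <= size q.

Definition internal (u : T) (p : seq T) : seq T := behead (belast u p).

Definition dist_eq2 (u v : T) : Prop :=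
  exists p, shortest_upath u v p /\ size p = 2.

Definition dist2_clique (K : {set T}) : Prop :=
  forall u v, u \in K -> v \in K -> u != v -> dist_eq2 u v.

Definition mv2_set (M : {set T}) : Prop :=
  forall u v, u \in M -> v \in M ->
    exists p, [/\ shortest_upath u v p, size p <= 2 &
                  forall w, w \in internal u p -> w \notin M].

Definition independent (M : {set T}) : Prop :=
  forall u v, u \in M -> v \in M -> ~~ e u v.

Definition i2dmv_set (M : {set T}) : Prop := independent M /\ mv2_set M.

Definition total_dominating (D : {set T}) : Prop :=
  forall v : T, exists2 u, u \in D & e v u.

Definition is_min (P : nat -> Prop) (k : nat) : Prop :=
  P k /\ forall j, P j -> k <= j.

Definition clique_cover_feasible (k : nat) : Prop :=
  exists P : {set {set T}},
    [/\ partition P [set: T], (forall K, K \in P -> dist2_clique K) & #|P| = k].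

Definition i2dmv_partition_feasible (k : nat) : Prop :=
  exists P : {set {set T}},
    [/\ partition P [set: T], (forall M, M \in P -> i2dmv_set M) & #|P| = k].

Definition total_dom_feasible (k : nat) : Prop :=
  exists D : {set T}, total_dominating D /\ #|D| = k.

End GraphDefs.

(* With girth at least 7, two vertices at distance 2 have exactly one common
   neighbour, and three pairwise-distance-2 vertices share one (otherwise the
   three connecting paths form a 6-cycle).  Hence the cliques of G^[2] are
   exactly the sets of vertices sharing a common neighbour: a clique cover of
   size m yields a total dominating set of size at most m (one common
   neighbour per clique), and a total dominating set D yields a clique cover
   of size at most |D| (group vertices by a chosen dominator; two such
   vertices are non-adjacent as G has no triangle).  Finally, a clique of
   G^[2] is precisely an I2DMV set, since a shortest path of length at most 2
   between two non-adjacent vertices has length exactly 2. *)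
From Stdlib Require Import Classical_Prop.
From mathcomp Require Import all_boot.
Set Implicit Arguments. Unset Strict Implicit. Unset Printing Implicit Defensive.

Lemma card_preim_partition_le (T rT : finType) (f : T -> rT) (D : {set T}) :
  #|preim_partition f D| <= #|f @: D|.
Proof.
rewrite /preim_partition /equivalence_partition.
have -> : [set [set y in D | f x == f y] | x in D] =
          [set [set y in D | a == f y] | a in f @: D] by rewrite -imset_comp.
exact: leq_imset_card.
Qed.

Lemma is_min_exists (P : nat -> Prop) n : P n -> exists k, is_min P k.
Proof.
elim/ltn_ind: n => n IH Pn.
case: (classic (exists2 j, P j & j < n)) => [[j Pj jn] | none].
  exact: IH jn Pj.
exists n; split => // j Pj; rewrite leqNgt; apply/negP => jn.
by apply: none; exists j.
Qed.

Lemma is_min_transfer (P Q : nat -> Prop) k :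
  (forall m, P m -> exists2 j, Q j & j <= m) ->
  (forall m, Q m -> exists2 j, P j & j <= m) ->
  is_min P k -> is_min Q k.
Proof.
move=> PQ QP [Pk kmin].
have lb m : Q m -> k <= m by move/QP=> [j /kmin kj jm]; exact: leq_trans jm.
have [j Qj jk] := PQ k Pk.
have kj : k = j by apply/eqP; rewrite eqn_leq jk lb.
by split=> [|m /lb]; rewrite ?kj.
Qed.

Section Distance2.

Variables (T : finType) (e : rel T).
Hypotheses (e_sym : symmetric e) (e_irr : irreflexive e).

Definition at_dist2 (u v : T) : Prop :=
  [/\ u != v, ~~ e u v & exists2 w, e u w & e w v].

Lemma adj_neq x y : e x y -> x != y.
Proof. by apply: contraTneq => ->; rewrite e_irr. Qed.

Lemma shortest_upath2 u v w :
  u != v -> ~~ e u v -> e u w -> e w v -> shortest_upath e u v [:: w; v].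
Proof.
move=> uv nuv uw wv; split.
  by rewrite /upath /= uw wv eqxx !inE !negb_or uv !adj_neq.
case=> [|a [|b q]] //= /and3P [/= pa /eqP la _].
  by move: uv; rewrite la eqxx.
by move: pa nuv; rewrite andbT la => ->.
Qed.

Lemma dist_eq2P u v : dist_eq2 e u v <-> at_dist2 u v.
Proof.
split=> [[p [[+ shortest] p2]] | [uv nuv [w uw wv]]]; last first.
  by exists [:: w; v]; split; first exact: shortest_upath2.
case: p p2 shortest => [|a [|b [|]]] //= _ shortest.
rewrite /upath /= andbT !inE negb_or.
move=> /and3P [/andP [ua ab] /eqP bv /and3P [/andP [_ ub] _ _]]; subst b.
split=> //; last by exists a.
apply/negP => euv; have := shortest [:: v].
by rewrite /upath /= euv eqxx !inE ub => /(_ isT).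
Qed.

Lemma dist2_clique_i2dmv (K : {set T}) : dist2_clique e K <-> i2dmv_set e K.
Proof.
split=> [K2 | [indK mvK] u v uK vK uv].
- have indK : independent e K.
    move=> u v uK vK; have [<- | uv] := eqVneq u v; first by rewrite e_irr.
    by have [] := (dist_eq2P u v).1 (K2 u v uK vK uv).
  split=> // u v uK vK; have [<- | uv] := eqVneq u v.
    by exists [::]; split=> //; split=> //; rewrite /upath /= eqxx.
  have [_ nuv [w uw wv]] := (dist_eq2P u v).1 (K2 u v uK vK uv).
  exists [:: w; v]; split; [exact: shortest_upath2 | by [] |].
  move=> x; rewrite /internal /= inE => /eqP ->.
  by apply: contraTN uw => wK; apply: indK.
- have [p [sp p_le2 _]] := mvK u v uK vK.
  exists p; split=> //; case: sp p_le2 => /and3P [pa /eqP la _] _.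
  case: p pa la => [|a [|b [|]]] //= pa la _.
  + by move: uv; rewrite la eqxx.
  + by move: pa (indK u v uK vK); rewrite andbT la => ->.
Qed.

Lemma clique_cover_i2dmv_partition m :
  clique_cover_feasible e m <-> i2dmv_partition_feasible e m.
Proof.
by split=> -[P [Ppart PK <-]]; exists P; split=> // K /PK /dist2_clique_i2dmv.
Qed.

Hypothesis girth7 : girth_ge7 e.

Lemma no_short_cycle s : uniq s -> cycle e s -> 3 <= size s <= 6 -> False.
Proof.
by move=> us cs /andP [s3 s6]; move: (girth7 us cs s3); rewrite leqNgt ltnS s6.
Qed.

Lemma no_triangle x y z : e x y -> e y z -> e z x -> False.
Proof.
move=> xy yz zx; apply: (@no_short_cycle [:: x; y; z]) => //.
  rewrite /= !inE !negb_or (adj_neq xy) (adj_neq yz).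
  by rewrite [x == z]eq_sym (adj_neq zx).
by rewrite /= xy yz zx.
Qed.

Lemma common_nbr_uniq x y a b :
  x != y -> e x a -> e a y -> e x b -> e b y -> a = b.
Proof.
move=> xy xa ay xb b_y; apply/eqP; apply: contraT => ab; exfalso.
apply: (@no_short_cycle [:: x; a; y; b]) => //.
  rewrite /= !inE !negb_or xy ab (adj_neq xa) (adj_neq ay) (adj_neq xb).
  by rewrite [y == b]eq_sym (adj_neq b_y).
by rewrite /= xa ay e_sym b_y e_sym xb.
Qed.

Lemma common_nbr_dist2_triangle x y z a :
  at_dist2 x y -> at_dist2 y z -> at_dist2 x z -> e x a -> e a y -> e z a.
Proof.
move=> [xy nxy _] [yz nyz [b yb bz]] [xz nxz [c xc cz]] xa ay.
apply: contraT => nza; exfalso.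
have ab : a != b by apply: contraNneq nza => ->; rewrite e_sym.
have ac : a != c by apply: contraNneq nza => ->; rewrite e_sym.
have bc : b != c.
  apply: contraNneq ab => bc; apply/eqP/(common_nbr_uniq xy xa ay).
    by rewrite bc.
  by rewrite e_sym.
have xb : x != b by apply: contraNneq nxy => ->; rewrite e_sym.
have yc : y != c by apply: contraNneq nxy => ->.
have az : a != z by apply: contraNneq nxz => <-.
apply: (@no_short_cycle [:: x; a; y; b; z; c]) => //.
  rewrite /= !inE !negb_or xy xb xz ab az ac bc yc yz.
  rewrite (adj_neq xa) (adj_neq xc) (adj_neq ay) (adj_neq yb) (adj_neq bz).
  by rewrite [z == c]eq_sym (adj_neq cz).
by rewrite /= xa ay yb bz e_sym cz e_sym xc.
Qed.

Hypothesis no_iso : no_isolated e.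

Lemma dist2_clique_common_nbr (K : {set T}) x :
  dist2_clique e K -> x \in K -> exists w, forall z, z \in K -> e z w.
Proof.
move=> K2 xK.
have d2 u v : u \in K -> v \in K -> u != v -> at_dist2 u v.
  by move=> uK vK uv; apply/dist_eq2P/K2.
have [y /andP [yK yx] | Kx] := pickP [pred y in K | y != x]; last first.
  have [w xw] := no_iso x; exists w => z zK.
  by move: (Kx z); rewrite /= zK => /negbFE /eqP ->.
have [_ _ [w xw wy]] : at_dist2 x y by apply: d2; rewrite // eq_sym.
exists w => z zK; have [-> // | zx] := eqVneq z x.
have [-> | zy] := eqVneq z y; first by rewrite e_sym.
by apply: (common_nbr_dist2_triangle (x := x) (y := y)) => //;
  apply: d2; rewrite // eq_sym.
Qed.

Lemma clique_cover_total_dom m :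
  clique_cover_feasible e m -> exists2 j, total_dom_feasible e j & j <= m.
Proof.
case=> P [Ppart P2 <-].
have [x0 _ | T0] := pickP (@predT T); last first.
  by exists 0; [exists set0; split=> [v|]; [move: (T0 v) | rewrite cards0] |].
pose f (K : {set T}) := odflt x0 [pick w | [forall z in K, e z w]].
exists #|f @: P|; last exact: leq_imset_card.
exists (f @: P); split=> // v.
have vP : v \in cover P by rewrite (cover_partition Ppart) inE.
have vK : v \in pblock P v by rewrite mem_pblock.
have KP : pblock P v \in P by apply: pblock_mem.
exists (f (pblock P v)); first exact: imset_f.
have [w Kw] := dist2_clique_common_nbr (P2 _ KP) vK.
rewrite /f; case: pickP => [w' /forallP /(_ v) /implyP -> // | none].
by move: (none w) => /forallP [] z; apply/implyP/Kw.
Qed.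

Lemma total_dom_clique_cover m :
  total_dom_feasible e m -> exists2 j, clique_cover_feasible e j & j <= m.
Proof.
case=> D [Ddom <-].
pose h v := odflt v [pick u in D | e v u].
have hP v : h v \in D /\ e v (h v).
  rewrite /h; case: pickP => [u /andP [uD vu] // | none].
  by have [u uD vu] := Ddom v; move: (none u); rewrite /= uD vu.
exists #|preim_partition h [set: T]|.
  exists (preim_partition h [set: T]); split=> //.
    exact: preim_partitionP.
  move=> _ /imsetP [x _ ->] u v; rewrite !inE => /eqP hu /eqP hv uv.
  have [_ uh] := hP u; have [_ vh] := hP v.
  rewrite -hu in uh; rewrite -hv in vh.
  apply/dist_eq2P; split=> //; last by exists (h x); rewrite // e_sym.
  by apply/negP => uv_adj; apply: (no_triangle uv_adj vh); rewrite e_sym.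
apply: leq_trans (card_preim_partition_le _ _) _; apply: subset_leq_card.
by apply/subsetP => _ /imsetP [x _ ->]; case: (hP x).
Qed.

End Distance2.

Theorem theorem3p6 (T : finType) (e : rel T)
  (e_sym : symmetric e) (e_irr : irreflexive e)
  (hg : girth_ge7 e) (hiso : no_isolated e) :
  exists k : nat,
    [/\ is_min (clique_cover_feasible e) k,
        is_min (i2dmv_partition_feasible e) k &
        is_min (total_dom_feasible e) k].
Proof.
have [k tdk] : exists k, is_min (total_dom_feasible e) k.
  apply: (@is_min_exists _ #|[set: T]|); exists [set: T]; split=> // v.
  by have [u vu] := hiso v; exists u; rewrite ?inE.
have cck : is_min (clique_cover_feasible e) k.
  apply: is_min_transfer tdk.
    exact: total_dom_clique_cover.
  exact: clique_cover_total_dom.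
exists k; split=> //.
by apply: is_min_transfer cck => m /(clique_cover_i2dmv_partition e_irr);
  exists m.
Qed.
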